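(* Let $\alpha>1$ and $n\ge0$ an integer. (1) $K_\alpha(x;n)$ is a rational function of $x$, smooth on $[0,+\infty)$, with $K_\alpha(x;n)=O(x)$ as $x\to0^+$ and $K_\alpha(x;n)=O(x^{-1})$ as $x\to+\infty$. (2) $K_\alpha(\frac{x}{y};n)=(-1)^nK_\alpha(\frac{y}{x};n)$ for all $x,y>0$. (3) There is a constant $C_n>0$ (depending on $n$ and $\alpha$) such that for all $x,y>0$: $\sup_{x>0}|K_\alpha(x;n)|\le C_n$; $\sup_{y>0}\left|\frac1yK_\alpha(\frac xy;n)\right|\le C_nx^{-1}$; $\sup_{y>0}\left|\frac{d}{dy}\left[\frac1yK_\alpha(\frac xy;n)\right]\right|\le C_nx^{-2}$; $\sup_{x>0}\left|\frac{d}{dy}\left[\frac1yK_\alpha(\frac xy;n)\right]\right|\le C_ny^{-2}$.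
   Context: $K_\alpha(x)=\frac{\sin(\frac{2\pi}{1+\alpha})}{\pi}\frac{x}{1+x^2-2x\cos(\frac{2\pi}{1+\alpha})}$, $D_x=x\frac{d}{dx}$, and $K_\alpha(x;n)=D_x^nK_\alpha(x)$ (with $D_x^0$ the identity). *)

From Stdlib Require Import Reals Lra List.
From Coquelicot Require Import Coquelicot.
Open Scope R_scope.

Definition Kalpha (alpha : R) (x : R) : R :=
  sin (2 * PI / (1 + alpha)) / PI
  * (x / (1 + x ^ 2 - 2 * x * cos (2 * PI / (1 + alpha)))).

Definition Dx (f : R -> R) : R -> R := fun x => x * Derive f x.

Fixpoint Kn (alpha : R) (n : nat) : R -> R :=
  match n with
  | O => Kalpha alpha
  | S m => Dx (Kn alpha m)
  end.

(* Polynomials as coefficient lists (constant term first), Horner evaluation. *)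
Definition peval (p : list R) (x : R) : R :=
  fold_right (fun a acc => a + x * acc) 0 p.

(* All [K_alpha(.;n)] live in the algebra generated by constants, [x] and [1/q],
   where [q x = 1 + x^2 - 2 x cos (2 pi/(1+alpha))] has no real zero because
   [alpha > 1].  This algebra is closed under [d/dx], which gives rationality,
   smoothness, and a factorization [K_alpha(x;n) = x g(x)] with [g], [g'] bounded
   on [[0,1]].  The inversion [x -> 1/x] fixes [K_alpha] and anticommutes with
   [D_x], so [K_alpha(1/x;n) = (-1)^n K_alpha(x;n)] carries bounds on [(0,1]] over
   to [[1,oo)].  Finally [d/dy (K(x/y;n)/y) = -(K(s;n) + K(s;n+1))/y^2] with
   [s = x/y]: this sum is [O(s)] near [0], and near [oo] it equals, up to sign,
   [K(u;n) - K(u;n+1) = -u^2 g'(u)] with [u = 1/s], hence is [O(s^-2)]. *)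

From Pilot Require Import Defs.
From Stdlib Require Import Reals Lra List.
From Coquelicot Require Import Coquelicot.
Open Scope R_scope.

Definition qden (c x : R) : R := 1 + x ^ 2 - 2 * x * c.

Lemma qden_pos c x : -1 < c < 1 -> 0 < qden c x.
Proof.
intros Hc; unfold qden.
assert (0 <= (x - c) ^ 2) by apply pow2_ge_0.
nra.
Qed.

Inductive qalg (c : R) : (R -> R) -> Prop :=
| qalg_const a : qalg c (fun _ => a)
| qalg_id : qalg c (fun x => x)
| qalg_inv_qden : qalg c (fun x => / qden c x)
| qalg_add f g : qalg c f -> qalg c g -> qalg c (fun x => f x + g x)
| qalg_mul f g : qalg c f -> qalg c g -> qalg c (fun x => f x * g x)
| qalg_ext f g : (forall x, f x = g x) -> qalg c f -> qalg c g.

Section QAlgebra.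
Variable c : R.
Hypothesis c_bounds : -1 < c < 1.

Lemma qalg_is_derive f :
  qalg c f -> exists f', qalg c f' /\ forall x, is_derive f x (f' x).
Proof.
induction 1 as [a| | |f g _ [f' [Hf' Df]] _ [g' [Hg' Dg]]
               |f g Hf [f' [Hf' Df]] Hg [g' [Hg' Dg]]|f g Efg _ [f' [Hf' Df]]].
- exists (fun _ => 0); split; [constructor|].
  intros x; auto_derive; auto; ring.
- exists (fun _ => 1); split; [constructor|].
  intros x; auto_derive; auto; ring.
- exists (fun x => (2 * c + -2 * x) * (/ qden c x * / qden c x)); split.
  + apply (qalg_mul c (fun x => 2 * c + -2 * x)).
    * apply (qalg_add c (fun _ => 2 * c)); [constructor|].
      apply (qalg_mul c (fun _ => -2)); constructor.
    * apply (qalg_mul c (fun x => / qden c x)); constructor.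
  + intros x; pose proof (qden_pos c x c_bounds) as Hq; unfold qden in *.
    auto_derive; [lra|field; lra].
- exists (fun x => f' x + g' x); split; [now constructor|].
  intros x; exact (is_derive_plus f g x _ _ (Df x) (Dg x)).
- exists (fun x => f' x * g x + f x * g' x); split.
  + apply (qalg_add c (fun x => f' x * g x)); now apply qalg_mul.
  + intros x; apply (is_derive_mult f g x); auto.
    intros; apply Rmult_comm.
- exists f'; split; [exact Hf'|].
  intros x; exact (is_derive_ext f g x _ Efg (Df x)).
Qed.

Lemma qalg_ex_derive f x : qalg c f -> ex_derive f x.
Proof.
intros Hf; destruct (qalg_is_derive f Hf) as [f' [_ Df]].
exists (f' x); apply Df.
Qed.

Lemma qalg_Derive f : qalg c f -> qalg c (Derive f).
Proof.
intros Hf; destruct (qalg_is_derive f Hf) as [f' [Hf' Df]].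
apply (qalg_ext c f'); [|exact Hf'].
intros x; symmetry; apply is_derive_unique, Df.
Qed.

Lemma qalg_ex_derive_n f k x : qalg c f -> ex_derive_n f k x.
Proof.
intros Hf; destruct k as [|k]; [exact I|].
apply qalg_ex_derive.
induction k as [|k IHk]; [exact Hf|].
exact (qalg_Derive _ IHk).
Qed.

Lemma qalg_bounded f a b : qalg c f ->
  exists M, 0 < M /\ forall x, a <= x <= b -> Rabs (f x) <= M.
Proof.
intros Hf.
destruct (bounded_continuity (K := R_AbsRing) (V := R_NormedModule) f a b)
  as [M HM].
{ intros x _; apply (ex_derive_continuous f x), qalg_ex_derive, Hf. }
exists (Rmax M 1); split; [apply Rlt_le_trans with 1; [lra|apply Rmax_r]|].
intros x Hx; apply Rle_trans with M; [|apply Rmax_l].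
apply Rlt_le, (HM x Hx).
Qed.

End QAlgebra.

Fixpoint padd (p q : list R) : list R :=
  match p, q with
  | nil, q => q
  | p, nil => p
  | a :: p', b :: q' => (a + b) :: padd p' q'
  end.

Fixpoint pmul (p q : list R) : list R :=
  match p with
  | nil => nil
  | a :: p' => padd (map (Rmult a) q) (0 :: pmul p' q)
  end.

Lemma peval_padd p q x : peval (padd p q) x = peval p x + peval q x.
Proof.
revert q; induction p as [|a p IHp]; intros [|b q]; simpl; try ring.
rewrite IHp; ring.
Qed.

Lemma peval_scale a q x : peval (map (Rmult a) q) x = a * peval q x.
Proof. induction q as [|b q IHq]; simpl; [|rewrite IHq]; ring. Qed.

Lemma peval_pmul p q x : peval (pmul p q) x = peval p x * peval q x.
Proof.
induction p as [|a p IHp]; simpl; [ring|].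
rewrite peval_padd, peval_scale; simpl; rewrite IHp; ring.
Qed.

Definition rational_fun (f : R -> R) : Prop :=
  exists P Q : list R, forall x, peval Q x <> 0 /\ f x = peval P x / peval Q x.

Lemma rational_fun_add f g :
  rational_fun f -> rational_fun g -> rational_fun (fun x => f x + g x).
Proof.
intros [P1 [Q1 H1]] [P2 [Q2 H2]].
exists (padd (pmul P1 Q2) (pmul P2 Q1)), (pmul Q1 Q2); intros x.
destruct (H1 x) as [N1 E1], (H2 x) as [N2 E2].
rewrite peval_padd, !peval_pmul, E1, E2.
split; [now apply Rmult_integral_contrapositive|field; auto].
Qed.

Lemma rational_fun_mul f g :
  rational_fun f -> rational_fun g -> rational_fun (fun x => f x * g x).
Proof.
intros [P1 [Q1 H1]] [P2 [Q2 H2]].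
exists (pmul P1 P2), (pmul Q1 Q2); intros x.
destruct (H1 x) as [N1 E1], (H2 x) as [N2 E2].
rewrite !peval_pmul, E1, E2.
split; [now apply Rmult_integral_contrapositive|field; auto].
Qed.

Lemma qalg_rational c f : -1 < c < 1 -> qalg c f -> rational_fun f.
Proof.
intros Hc; induction 1 as [a| | |f g _ IHf _ IHg|f g _ IHf _ IHg|f g Efg _ [P [Q E]]].
- exists (a :: nil), (1 :: nil); intros x; simpl; split; [lra|field].
- exists (0 :: 1 :: nil), (1 :: nil); intros x; simpl; split; [lra|field].
- exists (1 :: nil), (1 :: -2 * c :: 1 :: nil); intros x.
  pose proof (qden_pos c x Hc) as Hq; unfold qden in Hq; simpl.
  split; [nra|unfold qden; field; nra].
- now apply rational_fun_add.
- now apply rational_fun_mul.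
- exists P, Q; intros x; rewrite <- Efg; apply E.
Qed.

(* [Defs.Dx] is qualified because Stdlib's [Rderiv.Dx] shadows it. *)
Lemma Dx_comp_inv (f : R -> R) x :
  x <> 0 -> ex_derive f (/ x) -> Defs.Dx (fun t => f (/ t)) x = - Defs.Dx f (/ x).
Proof.
intros Hx Hf; unfold Defs.Dx.
replace (Derive (fun t => f (/ t)) x) with (Derive f (/ x) * - / x ^ 2).
- field; exact Hx.
- symmetry; apply is_derive_unique; auto_derive; [auto|].
  change (Derive (fun t => f t) (/ x)) with (Derive f (/ x)); field; exact Hx.
Qed.

Lemma Derive_dilated (f : R -> R) x y : y <> 0 -> ex_derive f (x / y) ->
  Derive (fun t => / t * f (x / t)) y = - / y ^ 2 * (f (x / y) + Defs.Dx f (x / y)).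
Proof.
intros Hy Hf; unfold Defs.Dx; apply is_derive_unique; auto_derive; [auto|].
change (Derive (fun t => f t) (x * / y)) with (Derive f (x * / y)).
unfold Rdiv; field; exact Hy.
Qed.

Lemma Rinv_in_unit s : 1 <= s -> 0 < / s <= 1.
Proof.
intros Hs; split; [apply Rinv_0_lt_compat; lra|].
rewrite <- Rinv_1; apply Rinv_le_contravar; lra.
Qed.

Lemma Rabs_le_on_pos (f : R -> R) M :
  (forall u, 0 < u <= 1 -> Rabs (f u) <= M) ->
  (forall s, 1 <= s -> Rabs (f s) <= M) ->
  forall s, 0 < s -> Rabs (f s) <= M.
Proof.
intros Hsmall Hlarge s Hs.
destruct (Rle_lt_dec s 1); [apply Hsmall|apply Hlarge]; lra.
Qed.

Section Kernel.
Variable alpha : R.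
Hypothesis halpha : 1 < alpha.

Let theta := 2 * PI / (1 + alpha).

Lemma cos_theta_bounds : -1 < cos theta < 1.
Proof.
pose proof PI_RGT_0.
assert (Htheta : 0 < theta < PI).
{ unfold theta; split; [apply Rdiv_lt_0_compat; lra|].
  apply Rmult_lt_reg_r with (1 + alpha); [lra|].
  unfold Rdiv; rewrite Rmult_assoc, Rinv_l by lra; nra. }
assert (0 < sin theta) by (apply sin_gt_0; lra).
pose proof (sin2_cos2 theta); unfold Rsqr in *.
nra.
Qed.

Lemma Kalpha_eq x : Kalpha alpha x = x * (sin theta / PI * / qden (cos theta) x).
Proof. unfold Kalpha, qden, theta, Rdiv; ring. Qed.

Lemma Kn_qalg n : qalg (cos theta) (Kn alpha n).
Proof.
induction n as [|n IHn].
- apply (qalg_ext _ _ _ (fun x => eq_sym (Kalpha_eq x))).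
  apply (qalg_mul _ (fun x => x)); [constructor|].
  apply (qalg_mul _ (fun _ => _)); constructor.
- apply (qalg_mul _ (fun x => x)); [constructor|].
  exact (qalg_Derive _ cos_theta_bounds _ IHn).
Qed.

Lemma Kn_ex_derive n x : ex_derive (Kn alpha n) x.
Proof. exact (qalg_ex_derive _ cos_theta_bounds _ x (Kn_qalg n)). Qed.

Lemma Kn_factor n :
  exists g, qalg (cos theta) g /\ forall x, Kn alpha n x = x * g x.
Proof.
destruct n as [|n].
- eexists; split; [|exact Kalpha_eq].
  apply (qalg_mul _ (fun _ => _)); constructor.
- exists (Derive (Kn alpha n)); split; [|reflexivity].
  exact (qalg_Derive _ cos_theta_bounds _ (Kn_qalg n)).
Qed.

Lemma Kn_inv n x : 0 < x -> Kn alpha n (/ x) = (-1) ^ n * Kn alpha n x.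
Proof.
revert x; induction n as [|n IHn]; intros x Hx.
- pose proof cos_theta_bounds as Hc.
  pose proof (qden_pos _ x Hc); pose proof (qden_pos _ (/ x) Hc); pose proof PI_RGT_0.
  simpl; rewrite !Kalpha_eq; unfold qden in *; field; lra.
- assert (Hflip : Defs.Dx (fun t => Kn alpha n (/ t)) x
                  = (-1) ^ n * Defs.Dx (Kn alpha n) x).
  { unfold Defs.Dx.
    rewrite (Derive_ext_loc _ (fun t => (-1) ^ n * Kn alpha n t)), Derive_scal; [ring|].
    apply (filter_imp (fun t => 0 < t)); [intros t Ht; apply IHn, Ht|].
    exact (open_gt 0 x Hx). }
  change (Defs.Dx (Kn alpha n) (/ x) = (-1) ^ S n * Defs.Dx (Kn alpha n) x).
  rewrite <- (Ropp_involutive (Defs.Dx _ (/ x))), <- Dx_comp_inv, Hflip; [simpl; ring|lra|].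
  apply Kn_ex_derive.
Qed.

Lemma Derive_dilated_Kn n x y : 0 < y ->
  Derive (fun t => / t * Kn alpha n (x / t)) y
  = - / y ^ 2 * (Kn alpha n (x / y) + Kn alpha (S n) (x / y)).
Proof.
intros Hy; apply Derive_dilated; [lra|].
apply Kn_ex_derive.
Qed.

Lemma Kn_factor_bounded n : exists g M, 0 < M
  /\ (forall x, Kn alpha n x = x * g x)
  /\ (forall x, ex_derive g x)
  /\ (forall u, 0 <= u <= 1 -> Rabs (g u) <= M /\ Rabs (Derive g u) <= M).
Proof.
pose proof cos_theta_bounds as Hc.
destruct (Kn_factor n) as [g [Hg Eg]].
destruct (qalg_bounded _ Hc g 0 1 Hg) as [A [HA Bg]].
destruct (qalg_bounded _ Hc (Derive g) 0 1 (qalg_Derive _ Hc _ Hg)) as [B [HB Bg']].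
exists g, (A + B); split; [lra|split; [exact Eg|split]].
- exact (fun x => qalg_ex_derive _ Hc _ x Hg).
- intros u Hu; specialize (Bg u Hu); specialize (Bg' u Hu).
  pose proof (Rabs_pos (g u)); pose proof (Rabs_pos (Derive g u)); split; lra.
Qed.

Section FactoredBounds.
Variables (n : nat) (g : R -> R) (M : R).
Hypothesis M_pos : 0 < M.
Hypothesis Kn_eq : forall x, Kn alpha n x = x * g x.
Hypothesis g_derivable : forall x, ex_derive g x.
Hypothesis g_bounds :
  forall u, 0 <= u <= 1 -> Rabs (g u) <= M /\ Rabs (Derive g u) <= M.

Lemma KSn_eq x : Kn alpha (S n) x = x * (g x + x * Derive g x).
Proof.
change (x * Derive (Kn alpha n) x = x * (g x + x * Derive g x)).
rewrite (Derive_ext _ _ x Kn_eq); f_equal.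
apply is_derive_unique; auto_derive; [apply g_derivable|].
change (Derive (fun t => g t) x) with (Derive g x); ring.
Qed.

Lemma Kn_le_small u : 0 <= u <= 1 -> Rabs (Kn alpha n u) <= M * u.
Proof.
intros Hu; destruct (g_bounds u Hu) as [Hg _].
rewrite Kn_eq, Rabs_mult, (Rabs_pos_eq u) by lra; nra.
Qed.

Lemma Kn_add_KSn_le_small u :
  0 <= u <= 1 -> Rabs (Kn alpha n u + Kn alpha (S n) u) <= 3 * M * u.
Proof.
intros Hu; destruct (g_bounds u Hu) as [Hg Hg'].
rewrite Kn_eq, KSn_eq.
replace (u * g u + u * (g u + u * Derive g u))
  with (u * (2 * g u + u * Derive g u)) by ring.
assert (Rabs (2 * g u + u * Derive g u) <= 3 * M).
{ eapply Rle_trans; [apply Rabs_triang|].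
  rewrite !Rabs_mult, (Rabs_pos_eq 2), (Rabs_pos_eq u) by lra.
  pose proof (Rabs_pos (Derive g u)); nra. }
rewrite Rabs_mult, (Rabs_pos_eq u) by lra; nra.
Qed.

Lemma Kn_le_large s : 1 <= s -> Rabs (Kn alpha n s) <= M / s.
Proof.
intros Hs; pose proof (Rinv_in_unit s Hs) as Hu.
rewrite <- (Rinv_inv s) at 1.
rewrite Kn_inv, Rabs_mult, pow_1_abs, Rmult_1_l by lra.
apply Kn_le_small; lra.
Qed.

(* After inversion the sum becomes [+-(Kn - KSn)] at [u = /s], where the terms
   of order [u] cancel, leaving [-u^2 g'(u)]. *)
Lemma Kn_add_KSn_le_large s :
  1 <= s -> Rabs (Kn alpha n s + Kn alpha (S n) s) <= M / s ^ 2.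
Proof.
intros Hs; pose proof (Rinv_in_unit s Hs) as Hu.
destruct (g_bounds (/ s)) as [_ Hg']; [lra|].
rewrite <- (Rinv_inv s) at 1 2.
rewrite (Kn_inv n (/ s)), (Kn_inv (S n) (/ s)) by lra.
replace ((-1) ^ n * Kn alpha n (/ s) + (-1) ^ S n * Kn alpha (S n) (/ s))
  with ((-1) ^ n * (Kn alpha n (/ s) - Kn alpha (S n) (/ s))) by (simpl; ring).
rewrite Rabs_mult, pow_1_abs, Rmult_1_l, Kn_eq, KSn_eq.
replace (/ s * g (/ s) - / s * (g (/ s) + / s * Derive g (/ s)))
  with (- ((/ s) ^ 2 * Derive g (/ s))) by ring.
rewrite Rabs_Ropp, Rabs_mult, (Rabs_pos_eq ((/ s) ^ 2)) by (apply pow2_ge_0).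
rewrite pow_inv, Rmult_comm; unfold Rdiv.
apply Rmult_le_compat_r; [apply Rlt_le, Rinv_0_lt_compat, pow_lt; lra|exact Hg'].
Qed.

Lemma Kn_le s : 0 < s -> Rabs (Kn alpha n s) <= M.
Proof.
apply Rabs_le_on_pos; intros u Hu.
- apply Rle_trans with (M * u); [apply Kn_le_small|]; nra.
- apply Rle_trans with (M / u); [apply Kn_le_large, Hu|].
  pose proof (Rinv_in_unit u Hu); unfold Rdiv; nra.
Qed.

Lemma mul_Kn_le s : 0 < s -> Rabs (s * Kn alpha n s) <= M.
Proof.
apply (Rabs_le_on_pos (fun s => s * Kn alpha n s)); intros u Hu;
  rewrite Rabs_mult, (Rabs_pos_eq u) by lra.
- assert (u * u <= 1) by nra.
  apply Rle_trans with (u * (M * u)); [|nra].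
  apply Rmult_le_compat_l; [lra|apply Kn_le_small; lra].
- apply Rle_trans with (u * (M / u)); [|right; field; lra].
  apply Rmult_le_compat_l; [lra|apply Kn_le_large, Hu].
Qed.

Lemma Kn_add_KSn_le s :
  0 < s -> Rabs (Kn alpha n s + Kn alpha (S n) s) <= 3 * M.
Proof.
apply (Rabs_le_on_pos (fun s => Kn alpha n s + Kn alpha (S n) s)); intros u Hu.
- apply Rle_trans with (3 * M * u); [apply Kn_add_KSn_le_small|]; nra.
- apply Rle_trans with (M / u ^ 2); [apply Kn_add_KSn_le_large, Hu|].
  assert (Hu2 : 1 <= u ^ 2) by nra.
  pose proof (Rinv_in_unit _ Hu2); unfold Rdiv; nra.
Qed.

Lemma sqr_mul_Kn_add_KSn_le s :
  0 < s -> Rabs (s ^ 2 * (Kn alpha n s + Kn alpha (S n) s)) <= 3 * M.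
Proof.
apply (Rabs_le_on_pos (fun s => s ^ 2 * (Kn alpha n s + Kn alpha (S n) s)));
  intros u Hu; rewrite Rabs_mult, (Rabs_pos_eq (u ^ 2)) by apply pow2_ge_0.
- assert (u * u <= 1) by nra; assert (u * u * u <= 1) by nra.
  apply Rle_trans with (u ^ 2 * (3 * M * u)); [|simpl; nra].
  apply Rmult_le_compat_l; [apply pow2_ge_0|apply Kn_add_KSn_le_small; lra].
- apply Rle_trans with (u ^ 2 * (M / u ^ 2)).
  + apply Rmult_le_compat_l; [apply pow2_ge_0|apply Kn_add_KSn_le_large, Hu].
  + replace (u ^ 2 * (M / u ^ 2)) with M by (field; lra); lra.
Qed.

Lemma dilated_Kn_le x y :
  0 < x -> 0 < y -> Rabs (/ y * Kn alpha n (x / y)) <= M / x.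
Proof.
intros Hx Hy.
replace (/ y * Kn alpha n (x / y)) with (/ x * (x / y * Kn alpha n (x / y)))
  by (field; lra).
rewrite Rabs_mult, Rabs_pos_eq, Rmult_comm by (apply Rlt_le, Rinv_0_lt_compat, Hx).
apply Rmult_le_compat_r; [apply Rlt_le, Rinv_0_lt_compat, Hx|].
apply mul_Kn_le, Rdiv_lt_0_compat; assumption.
Qed.

Lemma Derive_dilated_Kn_le_y x y : 0 < x -> 0 < y ->
  Rabs (Derive (fun t => / t * Kn alpha n (x / t)) y) <= 3 * M / y ^ 2.
Proof.
intros Hx Hy; pose proof (pow_lt y 2 Hy).
rewrite Derive_dilated_Kn, Rabs_mult, Rabs_Ropp, Rabs_pos_eq, Rmult_comm by
  (try apply Rlt_le, Rinv_0_lt_compat; lra).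
apply Rmult_le_compat_r; [apply Rlt_le, Rinv_0_lt_compat; lra|].
apply Kn_add_KSn_le, Rdiv_lt_0_compat; assumption.
Qed.

Lemma Derive_dilated_Kn_le_x x y : 0 < x -> 0 < y ->
  Rabs (Derive (fun t => / t * Kn alpha n (x / t)) y) <= 3 * M / x ^ 2.
Proof.
intros Hx Hy; pose proof (pow_lt x 2 Hx).
rewrite Derive_dilated_Kn by exact Hy.
replace (- / y ^ 2 * (Kn alpha n (x / y) + Kn alpha (S n) (x / y)))
  with (- / x ^ 2 * ((x / y) ^ 2 * (Kn alpha n (x / y) + Kn alpha (S n) (x / y))))
  by (field; lra).
rewrite Rabs_mult, Rabs_Ropp, Rabs_pos_eq, Rmult_comm by
  (apply Rlt_le, Rinv_0_lt_compat; lra).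
apply Rmult_le_compat_r; [apply Rlt_le, Rinv_0_lt_compat; lra|].
apply sqr_mul_Kn_add_KSn_le, Rdiv_lt_0_compat; assumption.
Qed.

End FactoredBounds.

End Kernel.

Theorem lemma3p2 (alpha : R) (n : nat) (halpha : 1 < alpha) :
  (* (1) rational function, smooth on [0,+oo), O(x) at 0+, O(1/x) at +oo *)
  ((exists P Q : list R, forall x : R,
        peval Q x <> 0 /\ Kn alpha n x = peval P x / peval Q x)
   /\ (forall (k : nat) (x : R), 0 <= x -> ex_derive_n (Kn alpha n) k x)
   /\ (exists C delta : R, 0 < delta /\
         forall x : R, 0 < x < delta -> Rabs (Kn alpha n x) <= C * x)
   /\ (exists C M : R,
         forall x : R, M < x -> Rabs (Kn alpha n x) <= C / x))
  (* (2) symmetry *)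
  /\ (forall x y : R, 0 < x -> 0 < y ->
        Kn alpha n (x / y) = (-1) ^ n * Kn alpha n (y / x))
  (* (3) uniform bounds *)
  /\ (exists Cn : R, 0 < Cn /\
        forall x y : R, 0 < x -> 0 < y ->
          Rabs (Kn alpha n x) <= Cn
          /\ Rabs (/ y * Kn alpha n (x / y)) <= Cn / x
          /\ Rabs (Derive (fun t => / t * Kn alpha n (x / t)) y) <= Cn / x ^ 2
          /\ Rabs (Derive (fun t => / t * Kn alpha n (x / t)) y) <= Cn / y ^ 2).
Proof.
pose proof (cos_theta_bounds alpha halpha) as Hc.
pose proof (Kn_qalg alpha halpha n) as HK.
destruct (Kn_factor_bounded alpha halpha n) as (g & M & HM & Eg & Dg & Bg).
split; [split; [|split; [|split]]|split].
- exact (qalg_rational _ _ Hc HK).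
- intros k x _; exact (qalg_ex_derive_n _ Hc _ k x HK).
- exists M, 1; split; [lra|].
  intros x Hx; eapply Kn_le_small; eauto; lra.
- exists M, 1; intros x Hx.
  eapply Kn_le_large; eauto; lra.
- intros x y Hx Hy.
  replace (x / y) with (/ (y / x)) by (field; lra).
  apply Kn_inv, Rdiv_lt_0_compat; assumption.
- exists (3 * M); split; [lra|]; intros x y Hx Hy.
  split; [|split; [|split]].
  + apply Rle_trans with M; [eapply Kn_le|]; eauto; lra.
  + apply Rle_trans with (M / x); [eapply dilated_Kn_le; eauto|].
    unfold Rdiv; apply Rmult_le_compat_r; [apply Rlt_le, Rinv_0_lt_compat|]; lra.
  + eapply Derive_dilated_Kn_le_x; eauto.
  + eapply Derive_dilated_Kn_le_y; eauto.
Qed.
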